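(* Let $n\ge 1$ be an integer and $x\in\mathbb{R}$, and let $z_1(x),\ldots,z_n(x)$ be the zeros (listed with multiplicity) of the normalized associated Legendre function $\psi_n(x,z)=\Gamma(1-z)P_n^z(\tanh x)$ with respect to $z$, as defined in the context. Then for each $\ell=1,\ldots,n$, $$\prod_{j=1}^n \bigl(\ell - z_j(x)\bigr) = (-1)^{n-\ell}\, e^{-2\ell x}\prod_{j=1}^n \bigl(\ell + z_j(x)\bigr),$$ i.e. whenever the denominators are nonzero, $$\prod_{j=1}^n \frac{\ell-z_j(x)}{\ell+z_j(x)} = (-1)^{n-\ell}\exp(-2\ell x),\qquad \ell=1,\ldots,n.$$
   Context: Fix an integer $n\ge1$. For $x\in\mathbb{R}$ and $z\in\mathbb{C}\setminus\{1,\ldots,n\}$ define $$\psi_n(x,z)=\frac{e^{zx}}{(1+e^{-2x})^n}\sum_{m=0}^n e^{-2mx}\binom{n}{m}\prod_{j=1}^m\frac{z+n+1-j}{z-j},$$ which equals $\Gamma(1-z)P_n^z(\tanh x)$, where $P_n^z$ is the associated Legendre function of degree $n$ and order $z$ and $\Gamma$ is the Euler gamma function. For each $x$, the polynomial $Q_x(z)=\sum_{m=0}^n e^{-2mx}\binom{n}{m}\prod_{j=1}^m(z+n+1-j)\prod_{k=m+1}^n(z-k)$ has degree $n$ with leading coefficient $(1+e^{-2x})^n$; its roots (with multiplicity) are denoted $z_1(x),\ldots,z_n(x)$, so that $\psi_n(x,z)=\frac{e^{zx}}{(1+e^{-2x})^n}\prod_{j=1}^n\frac{z-z_j(x)}{z-j}$.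 These are called the zeros of $\psi_n(x,\cdot)$. *)

From mathcomp Require Import all_boot all_algebra.
From mathcomp Require Import complex.
From mathcomp Require Import reals sequences.
Import GRing.Theory Num.Theory.
Local Open Scope ring_scope.
Local Open Scope complex_scope.

Definition Qpoly {R : realType} (n : nat) (x : R) : {poly R[i]} :=
  \sum_(m < n.+1)
     (((expR (- (2 * (m%:R)) * x))%:C * ('C(n, m))%:R) *:
      ((\prod_(1 <= j < m.+1) ('X + ((n.+1 - j)%:R)%:P)) *
       (\prod_(m.+1 <= k < n.+1) ('X - (k%:R)%:P)))).

(* zs lists the zeros z_1(x),...,z_n(x) of psi_n(x,.) (i.e. of Q_x) with
   multiplicity: Q_x = lead_coef Q_x * prod_j (X - z_j). *)
Definition psi_zeros {R : realType} (n : nat) (x : R) (zs : seq R[i]) : Prop :=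
  size zs = n /\
  Qpoly n x = lead_coef (Qpoly n x) *: \prod_(z <- zs) ('X - z%:P).

From mathcomp Require Import all_boot all_algebra.
From mathcomp Require Import complex.
From mathcomp Require Import reals sequences exp.
From mathcomp Require Import zify ring.
Import GRing.Theory Num.Theory.
Local Open Scope ring_scope.
Local Open Scope complex_scope.

(* Evaluate Q_x at z = l and at z = -l, for 1 <= l <= n.  At z = l the
   summands with m < l vanish, at z = -l those with m > n - l vanish, and
   after the shift m |-> m + l the surviving summands agree term by term up to
   the factor (-1)^l e^(-2lx) (both are, up to sign, the same ratio of
   factorials).  Hence Q_x(l) = (-1)^l e^(-2lx) Q_x(-l), and inserting the
   factorization Q_x = c prod_j (z - z_j), with c <> 0 since Q_x(n) <> 0,
   gives the claim. *)

Lemma prod_desc_fact b m : (m <= b)%N ->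
  (\prod_(1 <= j < m.+1) (b.+1 - j) * (b - m)`!)%N = b`!.
Proof.
move=> le_mb; rewrite -(ffact_fact le_mb) ffact_prod big_add1 /= big_mkord.
by congr (_ * _)%N; apply: eq_bigr => j _; rewrite subSS.
Qed.

Lemma prod_range_fact a b m n : (b <= a + m)%N -> (m <= n)%N ->
  (\prod_(m.+1 <= k < n.+1) (a + k - b) * (a + m - b)`!)%N = (a + n - b)`!.
Proof.
move=> le_b_am; elim: n => [|n IHn] le_mn.
  by rewrite (_ : m = 0%N) ?big_geq ?mul1n //; lia.
have [-> | ne_mn] := eqVneq m n.+1; first by rewrite big_geq // mul1n.
have le_mn' : (m <= n)%N by lia.
rewrite big_nat_recr //= mulnAC IHn //.
have -> : (a + n.+1 - b = (a + n - b).+1)%N by lia.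
by rewrite factS mulnC.
Qed.

Lemma sign_subn (R : comPzRingType) l n : (l <= n)%N ->
  (-1) ^+ (n - l) = (-1) ^+ l * (-1) ^+ n :> R.
Proof.
move=> le_ln; rewrite -[in RHS](subnK le_ln) exprD.
by rewrite mulrCA -expr2 sqrr_sign mulr1.
Qed.

Lemma prodrN_seq (R : comPzRingType) (I : Type) (r : seq I) (F : I -> R) :
  \prod_(i <- r) - F i = (-1) ^+ size r * \prod_(i <- r) F i.
Proof.
elim: r => [|a r IHr]; first by rewrite !big_nil expr0 mulr1.
by rewrite !big_cons IHr exprS; ring.
Qed.

Lemma prodrN_nat (R : comPzRingType) m n (F : nat -> R) :
  \prod_(m <= i < n) - F i = (-1) ^+ (n - m) * \prod_(m <= i < n) F i.
Proof. by rewrite prodrN_seq size_iota. Qed.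

Definition qterm {K : comPzRingType} (n m : nat) (c : K) : K :=
  'C(n, m)%:R * \prod_(1 <= j < m.+1) (c + (n.+1 - j)%:R) *
  \prod_(m.+1 <= k < n.+1) (c - k%:R).

Section QtermAtIntegers.
Variables (K : comPzRingType) (n m l : nat).
Hypothesis le_mln : (m + l <= n)%N.

Let D := ((m + l)`! * (n - (m + l))`! * (n - m)`! * m`!)%N.
Let N := (n`! * (l + n)`! * (n - l)`!)%N.

Lemma qterm_nat : qterm n (m + l) (l%:R : K) * D%:R = (-1) ^+ (n - (m + l)) * N%:R.
Proof.
set A := (\prod_(1 <= j < (m + l).+1) ((l + n).+1 - j))%N.
set B := (\prod_((m + l).+1 <= k < n.+1) (k - l))%N.
have eA : \prod_(1 <= j < (m + l).+1) (l%:R + (n.+1 - j)%:R) = A%:R :> K.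
  by rewrite natr_prod; apply: eq_big_nat => j hj; rewrite -natrD; congr _%:R; lia.
have eB : \prod_((m + l).+1 <= k < n.+1) (l%:R - k%:R) = (-1) ^+ (n - (m + l)) * B%:R :> K.
  rewrite natr_prod -[(n - _)%N]subSS -prodrN_nat.
  by apply: eq_big_nat => k hk; rewrite natrB ?opprB //; lia.
suff <- : ('C(n, m + l) * A * B * D = N)%N by rewrite /qterm eA eB !natrM; ring.
have hA : (A * (n - m)`! = (l + n)`!)%N.
  rewrite -(@prod_desc_fact (l + n) (m + l)); last by lia.
  by rewrite (_ : l + n - (m + l) = n - m)%N //; lia.
have hB : (B * m`! = (n - l)`!)%N.
  have := @prod_range_fact 0 l (m + l) n; rewrite !add0n addnK; apply; lia.
by rewrite /N /D -(bin_fact le_mln) -hA -hB; ring.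
Qed.

Lemma qterm_opp_nat : qterm n m (- l%:R : K) * D%:R = (-1) ^+ (n - m) * N%:R.
Proof.
set A := (\prod_(1 <= j < m.+1) ((n - l).+1 - j))%N.
set B := (\prod_(m.+1 <= k < n.+1) (l + k))%N.
have eA : \prod_(1 <= j < m.+1) (- l%:R + (n.+1 - j)%:R) = A%:R :> K.
  rewrite natr_prod; apply: eq_big_nat => j hj.
  by rewrite addrC -natrB; [congr _%:R|]; lia.
have eB : \prod_(m.+1 <= k < n.+1) (- l%:R - k%:R) = (-1) ^+ (n - m) * B%:R :> K.
  rewrite natr_prod -[(n - m)%N]subSS -prodrN_nat.
  by apply: eq_big_nat => k hk; rewrite natrD opprD.
have le_mn : (m <= n)%N by lia.
suff <- : ('C(n, m) * A * B * D = N)%N by rewrite /qterm eA eB !natrM; ring.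
have hA : (A * (n - (m + l))`! = (n - l)`!)%N.
  rewrite -(@prod_desc_fact (n - l) m); last by lia.
  by rewrite (_ : n - l - m = n - (m + l))%N //; lia.
have hB : (B * (m + l)`! = (l + n)`!)%N.
  have := @prod_range_fact l 0 m n isT le_mn.
  by rewrite (eq_bigr (fun k => l + k)%N (fun k _ => subn0 _)) !subn0 [(l + m)%N]addnC.
by rewrite /N /D -(bin_fact le_mn) -hA -hB; ring.
Qed.

End QtermAtIntegers.

Lemma qterm_reflect (K : numDomainType) n m l : (m + l <= n)%N ->
  qterm n (m + l) (l%:R : K) = (-1) ^+ l * qterm n m (- l%:R).
Proof.
move=> le_mln.
set D := ((m + l)`! * (n - (m + l))`! * (n - m)`! * m`!)%N.
have D_neq0 : D%:R != 0 :> K by rewrite pnatr_eq0 -lt0n !muln_gt0 !fact_gt0.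
apply: (mulIf D_neq0); rewrite qterm_nat // -mulrA qterm_opp_nat // mulrA.
by rewrite subnDA sign_subn //; lia.
Qed.

Lemma qterm_nat_eq0 (K : idomainType) n m l : (m < l <= n)%N ->
  qterm n m (l%:R : K) = 0.
Proof.
move=> hl; apply/eqP; rewrite /qterm mulf_eq0; apply/orP; right.
rewrite prodf_seq_eq0; apply/hasP.
exists l; first by rewrite mem_index_iota; lia.
by rewrite subrr eqxx.
Qed.

Lemma qterm_opp_nat_eq0 (K : idomainType) n m l : (1 <= l <= n)%N -> (n - l < m <= n)%N ->
  qterm n m (- l%:R : K) = 0.
Proof.
move=> hl hm; apply/eqP; rewrite /qterm -mulrA mulrCA mulf_eq0; apply/orP; left.
rewrite prodf_seq_eq0; apply/hasP; exists (n.+1 - l)%N; first by rewrite mem_index_iota; lia.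
by rewrite subKn ?addNr ?eqxx //; lia.
Qed.

Lemma qterm_nn_neq0 (K : numDomainType) n : qterm n n (n%:R : K) != 0.
Proof.
rewrite /qterm binn mul1r (big_geq (leqnn _)) mulr1 prodf_seq_neq0.
by apply/allP => j; rewrite mem_index_iota => hj; rewrite -natrD pnatr_eq0; lia.
Qed.

Section QpolyReflection.
Variables (R : realType) (n : nat) (x : R).
Local Notation w m := ((expR (- (2 * (m%:R)) * x))%:C : R[i]).

Lemma horner_Qpoly c : (Qpoly n x).[c] = \sum_(m < n.+1) w m * qterm n m c.
Proof.
rewrite /Qpoly horner_sum; apply: eq_bigr => m _.
rewrite hornerZ hornerM !horner_prod /qterm !mulrA.
congr (_ * _ * _ * _); apply: eq_bigr => k _.
  by rewrite hornerD hornerX hornerC.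
by rewrite hornerD hornerN hornerX hornerC.
Qed.

Lemma horner_Qpoly_nat l : (1 <= l <= n)%N ->
  (Qpoly n x).[l%:R] = \sum_(0 <= m < n.+1 - l) w (m + l)%N * qterm n (m + l) l%:R.
Proof.
move=> hl; rewrite horner_Qpoly -(big_mkord xpredT (fun m => w m * qterm n m _)).
rewrite (@big_cat_nat _ _ _ l) //=; last by lia.
rewrite big_nat_cond big1 ?add0r; last first.
  by move=> m /andP[/andP[_ lt_ml] _]; rewrite qterm_nat_eq0 ?mulr0 //; lia.
by rewrite -{1}[l]add0n big_addn.
Qed.

Lemma horner_Qpoly_opp_nat l : (1 <= l <= n)%N ->
  (Qpoly n x).[- l%:R] = \sum_(0 <= m < n.+1 - l) w m * qterm n m (- l%:R).
Proof.
move=> hl; rewrite horner_Qpoly -(big_mkord xpredT (fun m => w m * qterm n m _)).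
rewrite (@big_cat_nat _ _ _ (n.+1 - l)) //= ?leq_subr //.
rewrite [X in _ + X]big_nat_cond [X in _ + X]big1 ?addr0 //.
by move=> m /andP[/andP[? ?] _]; rewrite qterm_opp_nat_eq0 ?mulr0 //; lia.
Qed.

Lemma horner_Qpoly_reflect l : (1 <= l <= n)%N ->
  (Qpoly n x).[l%:R] = (-1) ^+ l * w l * (Qpoly n x).[- l%:R].
Proof.
move=> hl; rewrite horner_Qpoly_nat // horner_Qpoly_opp_nat // mulr_sumr.
apply: eq_big_nat => m hm; rewrite qterm_reflect; last by lia.
have -> : w (m + l)%N = w l * w m.
  by rewrite -(rmorphM (real_complex R)) -expRD natrD; congr (expR _)%:C; ring.
ring.
Qed.

Lemma Qpoly_neq0 : (0 < n)%N -> Qpoly n x != 0.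
Proof.
move=> n_gt0; apply: contraTneq (qterm_nn_neq0 R[i] n) => Q0.
have := @horner_Qpoly_nat n; rewrite n_gt0 leqnn Q0 horner0 subSnn big_nat1 add0n.
move=> /(_ isT)/esym/eqP; rewrite negbK mulf_eq0 fmorph_eq0.
by rewrite (negbTE (lt0r_neq0 (expR_gt0 _))).
Qed.

End QpolyReflection.

Theorem proposition1 (R : realType) (n : nat) (x : R) (zs : seq R[i]) :
  (1 <= n)%N -> psi_zeros n x zs ->
  forall l : nat, (1 <= l <= n)%N ->
    \prod_(z <- zs) (l%:R - z) =
    (-1) ^+ (n - l) * (expR (- (2 * l%:R) * x))%:C * \prod_(z <- zs) (l%:R + z).
Proof.
move=> n_gt0 [size_zs Q_factor] l hl.
set c := lead_coef (Qpoly n x).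
have c_neq0 : c != 0 by rewrite lead_coef_eq0 Qpoly_neq0.
have horner_factor y : (Qpoly n x).[y] = c * \prod_(z <- zs) (y - z).
  by rewrite {1}Q_factor hornerZ horner_prod; under eq_bigr do rewrite hornerXsubC.
have prod_opp : \prod_(z <- zs) (- l%:R - z) = (-1) ^+ n * \prod_(z <- zs) (l%:R + z).
  by rewrite -size_zs -prodrN_seq; apply: eq_bigr => z _; rewrite opprD.
have := @horner_Qpoly_reflect R n x l hl; rewrite !horner_factor prod_opp => Q_reflect.
apply: (mulfI c_neq0); rewrite Q_reflect sign_subn; last by case/andP: hl.
ring.
Qed.
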